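(* Let $G$ be a graph, $O\subseteq V(G)$, $r$ and $m$ non-negative integers, and $\prec$ a linear ordering of $V(G)$. Let $O'$ be the set of all $(r,\prec,m,O)$-rich vertices of $G$. If the weak $r$-coloring number of $(G,\prec)$ is at most $b$, then $|O'|\le \frac{b}{m}|O|$.
   Context: For a linear ordering $\prec$ of $V(G)$ and a non-negative integer $r$, a vertex $u$ is weakly $(r,\prec)$-reachable from a vertex $v\succeq u$ if there is a path $P$ in $G$ from $v$ to $u$ of length at most $r$ such that all vertices of $V(P)\setminus\{u\}$ are greater than $u$ in $\prec$. $L_{r,\prec}(v)$ is the set of vertices weakly $(r,\prec)$-reachable from $v$, and $R_{r,\prec}(u)$ is the set of vertices $v$ from which $u$ is weakly $(r,\prec)$-reachable. The weak $r$-coloring number of $(G,\prec)$ is $\max_{v\in V(G)}|L_{r,\prec}(v)|$. For $O\subseteq V(G)$ and a non-negative integer $m$, a vertex $v$ is $(r,\prec,m,O)$-rich if $|R_{r,\prec}(v)\cap O|\ge m$. *)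

From mathcomp Require Import all_boot all_order all_algebra.
From mathcomp Require Import boolp.
Set Implicit Arguments. Unset Strict Implicit. Unset Printing Implicit Defensive.

Section WReach.
Variables (T : finType) (e : rel T) (prec : rel T).

Definition simple_graph := symmetric e /\ irreflexive e.

Definition strict_linear_order :=
  [/\ irreflexive prec, transitive prec & forall x y, x != y -> prec x y || prec y x].

Definition wreach (r : nat) (v u : T) : Prop :=
  exists p : seq T,
    [/\ path e v p, last v p = u, uniq (v :: p), size p <= r
      & all (fun w => (w == u) || prec u w) (v :: p)].

Definition Lset (r : nat) (v : T) : {set T} := [set u | `[< wreach r v u >]].
Definition Rset (r : nat) (u : T) : {set T} := [set v | `[< wreach r v u >]].

Definition wcol (r : nat) : nat := \max_(v : T) #|Lset r v|.

Definition rich (r m : nat) (O : {set T}) (v : T) : bool := m <= #|Rset r v :&: O|.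

End WReach.

From mathcomp Require Import all_boot all_order all_algebra.
Set Implicit Arguments. Unset Strict Implicit. Unset Printing Implicit Defensive.
Import GRing.Theory Num.Theory.
Local Open Scope ring_scope.

(* Double counting of the pairs (u, v) with u rich, v in O and v weakly
   r-reaching u: each rich u accounts for at least m of them, while each
   v in O reaches at most wcol r <= b vertices, so m |O'| <= b |O|. *)

Lemma exchange_sum_card (I J : finType) (R : I -> J -> bool) (A : {set I}) (B : {set J}) :
  (\sum_(i in A) #|[set j in B | R i j]| = \sum_(j in B) #|[set i in A | R i j]|)%N.
Proof.
have cardE (K : finType) (C : {set K}) (P : pred K) :
    #|[set k in C | P k]| = (\sum_(k in C) P k)%N.
  rewrite -sum1_card big_mkcond [RHS]big_mkcond; apply: eq_bigr => k _.
  by rewrite inE; case: (k \in C); case: (P k).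
under eq_bigr do rewrite cardE.
by rewrite exchange_big; apply: eq_bigr => j _; rewrite cardE.
Qed.

Section RichVertices.
Variables (T : finType) (e prec : rel T) (r : nat).

Lemma mem_Rset u v : (v \in Rset e prec r u) = (u \in Lset e prec r v).
Proof. by rewrite !inE. Qed.

Lemma card_Lset_le_wcol v : (#|Lset e prec r v| <= wcol e prec r)%N.
Proof. exact: (leq_bigmax_cond v). Qed.

Lemma card_rich_le_wcol (O : {set T}) (m : nat) :
  (m * #|[set u | rich e prec r m O u]| <= #|O| * wcol e prec r)%N.
Proof.
set O' := [set u | _].
have rich_count : (m * #|O'| <= \sum_(u in O') #|[set v in O | v \in Rset e prec r u]|)%N.
  rewrite mulnC -sum_nat_const; apply: leq_sum => u; rewrite inE /rich.
  suff -> : [set v in O | v \in Rset e prec r u] = Rset e prec r u :&: O by [].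
  by apply/setP => v; rewrite !inE andbC.
apply: (leq_trans rich_count); rewrite exchange_sum_card -sum_nat_const.
apply: leq_sum => v _; apply: leq_trans (card_Lset_le_wcol v).
by apply: subset_leq_card; apply/subsetP => u; rewrite inE -mem_Rset => /andP[].
Qed.

End RichVertices.

Theorem mainTheorem3 (T : finType) (e prec : rel T) (O : {set T}) (r m b : nat) :
  simple_graph e -> strict_linear_order prec -> (0 < m)%N ->
  (wcol e prec r <= b)%N ->
  (#|[set v | rich e prec r m O v]|%:R : rat) <= (b%:R / m%:R) * #|O|%:R.
Proof.
move=> _ _ m_gt0 wcol_le_b.
have count_le : (m * #|[set v | rich e prec r m O v]| <= #|O| * b)%N.
  exact: leq_trans (card_rich_le_wcol e prec r O m) (leq_mul (leqnn _) wcol_le_b).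
rewrite mulrAC ler_pdivlMr ?ltr0n // -!natrM ler_nat.
by rewrite mulnC (mulnC b).
Qed.
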